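(* Suppose the shortest $s_0$-$s_1$ path $P_0$ in $G$ is unique. Then along every trajectory of the Physarum dynamics, for every vertex $v$ on $P_0$, $p_v(t)\to \operatorname{dist}(v,s_1)$ as $t\to\infty$, where $\operatorname{dist}(v,s_1)$ is the shortest-path distance (w.r.t. the lengths $L$) from $v$ to $s_1$ in $G$.
   Context: Let $G=(N,E)$ be a finite connected undirected graph with two distinct vertices $s_0$ (source) and $s_1$ (sink). Each edge $e$ has a fixed length $L_e>0$. Each edge has a time-dependent diameter $D_e(t)$ with $D_e(0)>0$, and resistance $R_e=L_e/D_e$. At each time $t$, the vertex potentials $p_v$ (normalized by $p_{s_1}=0$) are the solution of $\sum_{u\in\delta(v)}(p_v-p_u)/R_{uv}=b_v$ for all $v$, where $\delta(v)$ is the set of neighbours of $v$, $b_{s_0}=1$, $b_{s_1}=-1$, $b_v=0$ otherwise; for an edge $e=\{u,v\}$ with an arbitrarily fixed orientation $(u,v)$ the current is $Q_e=(p_u-p_v)/R_e=D_e(p_u-p_v)/L_e$. The diameters evolve by $\dot D_e(t)=|Q_e(t)|-D_e(t)$ for all $e\in E$ (the ''Physarum dynamics''). *)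

From Stdlib Require Import Reals List Arith.
Import ListNotations.
Open Scope R_scope.

(* A finite undirected graph: vertices 0..n-1, edges 0..m-1; edge e joins
   eu e and ev e (the fixed orientation of e is (eu e, ev e)). *)

Definition other (eu ev : nat -> nat) (e x : nat) : nat :=
  if Nat.eqb (eu e) x then ev e else eu e.

Fixpoint is_walk (m : nat) (eu ev : nat -> nat) (x : nat) (es : list nat) (y : nat) : Prop :=
  match es with
  | [] => x = y
  | e :: es' => (e < m)%nat /\ (eu e = x \/ ev e = x) /\
                is_walk m eu ev (other eu ev e x) es' y
  end.

Fixpoint walk_verts (eu ev : nat -> nat) (x : nat) (es : list nat) : list nat :=
  match es with
  | [] => [x]
  | e :: es' => x :: walk_verts eu ev (other eu ev e x) es'
  end.

Definition is_path (m : nat) (eu ev : nat -> nat) (x : nat) (es : list nat) (y : nat) : Prop :=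
  is_walk m eu ev x es y /\ NoDup (walk_verts eu ev x es).

Definition walk_len (L : nat -> R) (es : list nat) : R :=
  fold_right (fun e acc => L e + acc) 0 es.

Definition simple_graph (n m : nat) (eu ev : nat -> nat) : Prop :=
  (forall e, (e < m)%nat -> (eu e < n)%nat /\ (ev e < n)%nat /\ eu e <> ev e) /\
  (forall e f, (e < m)%nat -> (f < m)%nat -> e <> f ->
     ~ ((eu e = eu f /\ ev e = ev f) \/ (eu e = ev f /\ ev e = eu f))).

Definition connected (n m : nat) (eu ev : nat -> nat) : Prop :=
  forall u v, (u < n)%nat -> (v < n)%nat -> exists es, is_walk m eu ev u es v.

Definition is_dist (m : nat) (eu ev : nat -> nat) (L : nat -> R) (x y : nat) (d : R) : Prop :=
  (exists es, is_walk m eu ev x es y /\ walk_len L es = d) /\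
  (forall es, is_walk m eu ev x es y -> d <= walk_len L es).

Definition unique_shortest_path (m : nat) (eu ev : nat -> nat) (L : nat -> R)
    (s0 s1 : nat) (P0 : list nat) : Prop :=
  is_path m eu ev s0 P0 s1 /\
  (forall es, is_path m eu ev s0 es s1 -> es <> P0 -> walk_len L P0 < walk_len L es).

Definition current (eu ev : nat -> nat) (L : nat -> R) (D : R -> nat -> R)
    (p : R -> nat -> R) (t : R) (e : nat) : R :=
  D t e / L e * (p t (eu e) - p t (ev e)).

Definition net_out (m : nat) (eu ev : nat -> nat) (L : nat -> R) (D : R -> nat -> R)
    (p : R -> nat -> R) (t : R) (v : nat) : R :=
  fold_right (fun e acc =>
      (if Nat.eqb (eu e) v then current eu ev L D p t e
       else if Nat.eqb (ev e) v then - current eu ev L D p t e else 0) + acc)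
    0 (seq 0 m).

Definition supply (s0 s1 v : nat) : R :=
  if Nat.eqb v s0 then 1 else if Nat.eqb v s1 then -1 else 0.

Definition potentials_ok (n m : nat) (eu ev : nat -> nat) (L : nat -> R)
    (D : R -> nat -> R) (p : R -> nat -> R) (s0 s1 : nat) : Prop :=
  forall t, 0 <= t ->
    p t s1 = 0 /\
    forall v, (v < n)%nat -> net_out m eu ev L D p t v = supply s0 s1 v.

Definition physarum_traj (m : nat) (eu ev : nat -> nat) (L : nat -> R)
    (D : R -> nat -> R) (p : R -> nat -> R) : Prop :=
  forall e, (e < m)%nat ->
    0 < D 0 e /\
    (forall eps, 0 < eps -> exists delta, 0 < delta /\
        forall t, 0 <= t < delta -> Rabs (D t e - D 0 e) < eps) /\
    (forall t, 0 < t ->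
        derivable_pt_lim (fun s => D s e) t
          (Rabs (current eu ev L D p t e) - D t e)).

(* Write E(t) = p_s0(t) for the energy (effective resistance) of the network with
   diameters D(t), S(t) = sum_e L_e |Q_e(t)| for the cost of the current,
   V(t) = sum_e L_e D_e(t) for the volume, and L0 for the length of a shortest
   s0-s1 walk P0. At every instant, electrical-network theory gives S >= L0 (weak
   duality with the distance-to-s1 potential), 2 S <= E + V, |Q_e| <= 1,
   E <= sum_{e in P0} L_e |Q_e| / D_e, and Rayleigh monotonicity of E in D.
   Along a trajectory, the Lyapunov function G = sum_{e in P0} L_e ln D_e - V is
   nondecreasing with G' >= max (S - L0) ((E + V)/2 - L0), and bounded, so it
   settles; hence the diameters on P0 stay bounded away from 0, V -> L0, and
   E -> L0 (from above via Rayleigh monotonicity and D' >= -D). Then the slack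
   E - 2 S + V = sum_e L_e D_e (|Q_e| / D_e - 1)^2 tends to 0, so the potential
   drop across each edge e of P0 is eventually at most about L_e; as the total
   drop E tends to L0, the potential at a vertex v of P0 tends to the length of
   the part of P0 after v, which is dist(v, s1). Uniqueness of the shortest path
   is only used to know that P0 is a shortest walk. *)

From Stdlib Require Import Reals List Arith Lra Lia ClassicalEpsilon.
Import ListNotations.
Open Scope R_scope.

Definition lsum (l : list nat) (f : nat -> R) : R :=
  fold_right (fun e acc => f e + acc) 0 l.
Arguments lsum : simpl never.

Lemma lsum_nil f : lsum [] f = 0.
Proof. reflexivity. Qed.

Lemma lsum_cons a l f : lsum (a :: l) f = f a + lsum l f.
Proof. reflexivity. Qed.

Lemma lsum_app l1 l2 f : lsum (l1 ++ l2) f = lsum l1 f + lsum l2 f.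
Proof.
  induction l1 as [|a l1 IH]; cbn [app]; rewrite ?lsum_nil, ?lsum_cons, ?IH; ring.
Qed.

Lemma lsum_ext l f g : (forall e, In e l -> f e = g e) -> lsum l f = lsum l g.
Proof.
  induction l as [|a l IH]; intros H; [reflexivity|].
  rewrite !lsum_cons, (H a (or_introl eq_refl)), IH; auto.
  intros e He. apply H. now right.
Qed.

Lemma lsum_plus l f g : lsum l (fun e => f e + g e) = lsum l f + lsum l g.
Proof. induction l as [|a l IH]; rewrite ?lsum_nil, ?lsum_cons, ?IH; ring. Qed.

Lemma lsum_scal l c f : lsum l (fun e => c * f e) = c * lsum l f.
Proof. induction l as [|a l IH]; rewrite ?lsum_nil, ?lsum_cons, ?IH; ring. Qed.

Lemma lsum_minus l f g : lsum l (fun e => f e - g e) = lsum l f - lsum l g.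
Proof. induction l as [|a l IH]; rewrite ?lsum_nil, ?lsum_cons, ?IH; ring. Qed.

Lemma lsum_add_const l g c :
  lsum l (fun e => g e + c) = lsum l g + c * INR (length l).
Proof.
  induction l as [|a l IH]; rewrite ?lsum_nil, ?lsum_cons, ?IH; cbn [length];
    rewrite ?S_INR; simpl; ring.
Qed.

Lemma lsum_le l f g : (forall e, In e l -> f e <= g e) -> lsum l f <= lsum l g.
Proof.
  induction l as [|a l IH]; intros H; rewrite ?lsum_nil, ?lsum_cons; [lra|].
  apply Rplus_le_compat; [apply H; now left | apply IH; intros; apply H; now right].
Qed.

Lemma lsum_nonneg l f : (forall e, In e l -> 0 <= f e) -> 0 <= lsum l f.
Proof.
  intros H. replace 0 with (lsum l (fun _ => 0 * 0)) by (rewrite lsum_scal; ring).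
  apply lsum_le. intros e He. rewrite Rmult_0_l. now apply H.
Qed.

Lemma lsum_ge_term l f a :
  In a l -> (forall e, In e l -> 0 <= f e) -> f a <= lsum l f.
Proof.
  induction l as [|b l IH]; intros Ha H; [destruct Ha|]. rewrite lsum_cons.
  assert (0 <= f b) by (apply H; left; auto).
  assert (0 <= lsum l f) by (apply lsum_nonneg; intros; apply H; right; auto).
  destruct Ha as [<-|Ha]; [lra|].
  assert (f a <= lsum l f) by (apply IH; auto; intros; apply H; right; auto). lra.
Qed.

Lemma lsum_abs l f : Rabs (lsum l f) <= lsum l (fun e => Rabs (f e)).
Proof.
  induction l as [|a l IH]; rewrite ?lsum_nil, ?lsum_cons; [rewrite Rabs_R0; lra|].
  eapply Rle_trans; [apply Rabs_triang | lra].
Qed.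

Lemma lsum_swap l1 l2 (g : nat -> nat -> R) :
  lsum l1 (fun v => lsum l2 (fun e => g v e)) = lsum l2 (fun e => lsum l1 (fun v => g v e)).
Proof.
  induction l1 as [|a l1 IH].
  - rewrite lsum_nil. symmetry. induction l2; auto. rewrite lsum_cons, IHl2, lsum_nil. ring.
  - rewrite lsum_cons, IH, <- lsum_plus. reflexivity.
Qed.

Lemma lsum_seq_delta n a (f : nat -> R) c : (a < n)%nat ->
  lsum (seq 0 n) (fun v => f v * (if Nat.eqb a v then c else 0)) = f a * c.
Proof.
  intros Ha. assert (Hin : In a (seq 0 n)) by (apply in_seq; lia).
  pose proof (seq_NoDup n 0) as Hnd. induction (seq 0 n) as [|b l IH]; [destruct Hin|].
  inversion Hnd as [|? ? Hb Hnd']; subst. rewrite lsum_cons.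
  destruct Hin as [->|Hin].
  - rewrite Nat.eqb_refl, (lsum_ext _ _ (fun _ => 0 * f a)), lsum_scal; [ring|].
    intros v Hv. destruct (Nat.eqb_spec a v); [subst; contradiction | ring].
  - destruct (Nat.eqb_spec a b); [subst; contradiction|]. rewrite IH; auto. ring.
Qed.

Definition eventually (P : R -> Prop) : Prop := exists T, forall t, T <= t -> P t.

Lemma eventually_ge a : eventually (fun t => a <= t).
Proof. exists a; auto. Qed.

Lemma eventually_mono (P Q : R -> Prop) :
  (forall t, P t -> Q t) -> eventually P -> eventually Q.
Proof. intros H [T HT]. exists T; auto. Qed.

Lemma eventually_and (P Q : R -> Prop) :
  eventually P -> eventually Q -> eventually (fun t => P t /\ Q t).
Proof.
  intros [T1 H1] [T2 H2]. exists (Rmax T1 T2). intros t Ht.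
  split; [apply H1 | apply H2]; eapply Rle_trans; eauto; [apply Rmax_l | apply Rmax_r].
Qed.

Lemma eventually_all (P : nat -> R -> Prop) l :
  (forall e, In e l -> eventually (P e)) -> eventually (fun t => forall e, In e l -> P e t).
Proof.
  induction l as [|a l IH]; intros H.
  - exists 0. intros t _ e [].
  - destruct (eventually_and _ _ (H a (or_introl eq_refl)) (IH (fun e He => H e (or_intror He))))
      as [T HT].
    exists T. intros t Ht e He. destruct (HT t Ht) as [Ha Hl].
    destruct He as [<-|He]; auto.
Qed.

Lemma eventually_window (P : R -> Prop) delta :
  eventually P -> eventually (fun t => forall s, t - delta <= s -> P s).
Proof. intros [T HT]. exists (T + delta). intros t Ht s Hs. apply HT. lra. Qed.

Lemma exp_le_exp x y : x <= y -> exp x <= exp y.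
Proof. intros [H|H]; [left; now apply exp_increasing | subst; lra]. Qed.

Lemma ln_le_ln x y : 0 < x -> x <= y -> ln x <= ln y.
Proof. intros Hx [H|H]; [left; now apply ln_increasing | subst; lra]. Qed.

Lemma deriv_lsum l (h : nat -> R -> R) (h' : nat -> R) x :
  (forall e, In e l -> derivable_pt_lim (h e) x (h' e)) ->
  derivable_pt_lim (fun t => lsum l (fun e => h e t)) x (lsum l h').
Proof.
  induction l as [|a l IH]; intros H.
  - exact (derivable_pt_lim_const 0 x).
  - exact (derivable_pt_lim_plus _ _ x _ _ (H a (or_introl eq_refl))
             (IH (fun e He => H e (or_intror He)))).
Qed.

Lemma nondecreasing_of_deriv (g g' : R -> R) a b : a <= b ->
  (forall c, a <= c <= b -> derivable_pt_lim g c (g' c)) ->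
  (forall c, a <= c <= b -> 0 <= g' c) -> g a <= g b.
Proof.
  intros [Hab|Hab] Hd Hp; [|subst; lra].
  destruct (MVT_cor2 g g' a b Hab Hd) as (c & Hc & Hcab).
  specialize (Hp c ltac:(lra)). nra.
Qed.

Lemma exp_weighted_growth (g g' : R -> R) a b : a <= b ->
  (forall c, a <= c <= b -> derivable_pt_lim g c (g' c)) ->
  (forall c, a <= c <= b -> 0 <= g c + g' c) -> g a * exp (a - b) <= g b.
Proof.
  intros Hab Hd Hp.
  assert (Hmono : g a * exp a <= g b * exp b).
  { apply (nondecreasing_of_deriv (fun t => g t * exp t) (fun t => g' t * exp t + g t * exp t));
      auto.
    - intros c Hc. exact (derivable_pt_lim_mult _ _ c _ _ (Hd c Hc) (derivable_pt_lim_exp c)).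
    - intros c Hc. specialize (Hp c Hc). pose proof (exp_pos c). nra. }
  unfold Rminus. rewrite exp_plus, exp_Ropp.
  pose proof (exp_pos b). apply (Rmult_le_reg_r (exp b)); auto.
  replace (g a * (exp a * / exp b) * exp b) with (g a * exp a) by (field; lra). lra.
Qed.

Lemma exp_tail_small a K eps : 0 < eps -> eventually (fun t => K * exp (a - t) < eps).
Proof.
  intros Heps. exists (a + Rabs K / eps). intros t Ht.
  assert (HK : Rabs K <= eps * (t - a)).
  { apply (Rmult_le_reg_r (/ eps)); [now apply Rinv_0_lt_compat|].
    replace (eps * (t - a) * / eps) with (t - a) by (field; lra). unfold Rdiv in Ht. lra. }
  pose proof (exp_ineq1_le (t - a)) as Hexp. pose proof (exp_pos (a - t)).
  assert (Hinv : exp (a - t) * exp (t - a) = 1).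
  { rewrite <- exp_plus. replace (a - t + (t - a)) with 0 by ring. apply exp_0. }
  assert (Hlt : Rabs K < eps * exp (t - a)) by nra.
  assert (Rabs K * exp (a - t) < eps * exp (t - a) * exp (a - t))
    by (apply Rmult_lt_compat_r; auto).
  pose proof (Rle_abs K). nra.
Qed.

Section Walks.

Variables (m : nat) (eu ev : nat -> nat) (L : nat -> R).
Hypothesis HL : forall e, (e < m)%nat -> 0 < L e.

Lemma walk_len_lsum es : walk_len L es = lsum es L.
Proof. reflexivity. Qed.

Lemma walk_app a es1 x es2 b :
  is_walk m eu ev a es1 x -> is_walk m eu ev x es2 b -> is_walk m eu ev a (es1 ++ es2) b.
Proof.
  revert a. induction es1 as [|e es1 IH]; simpl; intros a H1 H2; [now subst|].
  destruct H1 as (He & Ha & Hw). eauto.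
Qed.

Lemma walk_edges a es b : is_walk m eu ev a es b -> forall e, In e es -> (e < m)%nat.
Proof.
  revert a. induction es as [|f es IH]; simpl; intros a Hw e He; [destruct He|].
  destruct Hw as (Hf & _ & Hw). destruct He as [<-|He]; eauto.
Qed.

Lemma walk_len_nonneg a es b : is_walk m eu ev a es b -> 0 <= walk_len L es.
Proof.
  intros Hw. apply lsum_nonneg. intros e He. left. eapply HL, walk_edges; eauto.
Qed.

Lemma walk_split a es b x : is_walk m eu ev a es b -> In x (walk_verts eu ev a es) ->
  exists es1 es2 pre, es = es1 ++ es2 /\ is_walk m eu ev a es1 x /\
    is_walk m eu ev x es2 b /\ walk_verts eu ev a es = pre ++ walk_verts eu ev x es2.
Proof.
  revert a. induction es as [|e es IH]; intros a Hw Hx; simpl in *.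
  - destruct Hx as [<-|[]]. exists [], [], []. simpl. auto.
  - destruct Hx as [<-|Hx].
    + exists [], (e :: es), []. simpl. auto.
    + destruct Hw as (He & Ha & Hw).
      destruct (IH _ Hw Hx) as (es1 & es2 & pre & -> & H1 & H2 & H3).
      exists (e :: es1), es2, (a :: pre). simpl. rewrite H3. auto.
Qed.

(* cutting out cycles turns every walk into a path that is no longer *)
Lemma walk_to_path a es b : is_walk m eu ev a es b ->
  exists es', is_path m eu ev a es' b /\ walk_len L es' <= walk_len L es.
Proof.
  revert a. induction es as [|e es IH]; intros a Hw.
  - exists []. split; [split; [auto | repeat constructor; simpl; tauto] | lra].
  - destruct Hw as (He & Ha & Hw). destruct (IH _ Hw) as (es' & [Hw' Hnd] & Hlen).
    rewrite walk_len_lsum, lsum_cons, <- walk_len_lsum. pose proof (HL e He).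
    destruct (in_dec Nat.eq_dec a (walk_verts eu ev (other eu ev e a) es')) as [Hin|Hin].
    + destruct (walk_split _ _ _ _ Hw' Hin) as (es1 & es2 & pre & -> & H1 & H2 & H3).
      exists es2. split; [split; [auto | rewrite H3 in Hnd; eapply NoDup_app_remove_l; eauto]|].
      rewrite !walk_len_lsum, lsum_app in *.
      pose proof (walk_len_nonneg _ _ _ H1). rewrite walk_len_lsum in *. lra.
    + exists (e :: es'). split; [split; [simpl; auto | simpl; constructor; auto]|].
      rewrite walk_len_lsum, lsum_cons, <- walk_len_lsum. lra.
Qed.

Lemma unique_shortest_is_shortest s0 s1 P0 : unique_shortest_path m eu ev L s0 s1 P0 ->
  forall es, is_walk m eu ev s0 es s1 -> walk_len L P0 <= walk_len L es.
Proof.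
  intros [_ Huniq] es Hw. destruct (walk_to_path _ _ _ Hw) as (es' & Hp & Hle).
  destruct (list_eq_dec Nat.eq_dec es' P0) as [->|Hne]; [lra|].
  specialize (Huniq es' Hp Hne). lra.
Qed.

Lemma shortest_suffix_dist s0 s1 P0 es1 es2 v d :
  (forall es, is_walk m eu ev s0 es s1 -> walk_len L P0 <= walk_len L es) ->
  P0 = es1 ++ es2 -> is_walk m eu ev s0 es1 v -> is_walk m eu ev v es2 s1 ->
  is_dist m eu ev L v s1 d -> d = walk_len L es2.
Proof.
  intros Hmin -> H1 H2 [(w & Hw & <-) Hd].
  specialize (Hd es2 H2). specialize (Hmin (es1 ++ w) (walk_app _ _ _ _ _ H1 Hw)).
  rewrite !walk_len_lsum, !lsum_app in *. lra.
Qed.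

Lemma walk_abs_le (g : nat -> R) a es b : is_walk m eu ev a es b ->
  Rabs (g a - g b) <= lsum es (fun e => Rabs (g (eu e) - g (ev e))).
Proof.
  revert a. induction es as [|e es IH]; intros a Hw; simpl in Hw.
  - subst. rewrite Rminus_diag, Rabs_R0, lsum_nil. lra.
  - destruct Hw as (He & Ha & Hw). rewrite lsum_cons. specialize (IH _ Hw).
    set (y := other eu ev e a) in *.
    assert (Hstep : Rabs (g a - g y) <= Rabs (g (eu e) - g (ev e))).
    { unfold y, other. destruct (Nat.eqb_spec (eu e) a) as [<-|Hne]; [lra|].
      destruct Ha as [Ha|<-]; [congruence|]. rewrite Rabs_minus_sym. lra. }
    replace (g a - g b) with ((g a - g y) + (g y - g b)) by ring.
    eapply Rle_trans; [apply Rabs_triang | lra].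
Qed.

Lemma walk_drop_bound (g : nat -> R) eta a es b : is_walk m eu ev a es b ->
  (forall e, In e es -> Rabs (g (eu e) - g (ev e)) <= L e + eta) ->
  Rabs (g a - g b) <= walk_len L es + eta * INR (length es).
Proof.
  intros Hw Hes. eapply Rle_trans; [apply (walk_abs_le g _ _ _ Hw)|].
  rewrite walk_len_lsum, <- lsum_add_const. now apply lsum_le.
Qed.

End Walks.

Section Network.

Variables (n m : nat) (eu ev : nat -> nat) (L : nat -> R) (s0 s1 : nat).
Hypothesis Hsimple : simple_graph n m eu ev.
Hypothesis Hconn : connected n m eu ev.
Hypothesis Hs0 : (s0 < n)%nat.
Hypothesis Hs1 : (s1 < n)%nat.
Hypothesis Hs01 : s0 <> s1.
Hypothesis HL : forall e, (e < m)%nat -> 0 < L e.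

Lemma edge_ends e : (e < m)%nat -> (eu e < n)%nat /\ (ev e < n)%nat /\ eu e <> ev e.
Proof. apply Hsimple. Qed.

Definition net_flow (F : nat -> R) (v : nat) : R :=
  lsum (seq 0 m) (fun e =>
    if Nat.eqb (eu e) v then F e else if Nat.eqb (ev e) v then - F e else 0).

Definition unit_flow (F : nat -> R) : Prop :=
  forall v, (v < n)%nat -> net_flow F v = supply s0 s1 v.

Definition cost (F : nat -> R) : R := lsum (seq 0 m) (fun e => L e * Rabs (F e)).

(* Summation by parts: a unit s0-s1 flow paired with the gradient of any
   vertex function f gives f s0 - f s1. *)
Lemma unit_flow_pairing F f : unit_flow F ->
  lsum (seq 0 m) (fun e => F e * (f (eu e) - f (ev e))) = f s0 - f s1.
Proof.
  intros HF.
  assert (Hedge : forall e, In e (seq 0 m) ->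
    lsum (seq 0 n) (fun v => f v *
      (if Nat.eqb (eu e) v then F e else if Nat.eqb (ev e) v then - F e else 0))
    = F e * (f (eu e) - f (ev e))).
  { intros e He. apply in_seq in He. destruct (edge_ends e ltac:(lia)) as (Hu & Hv & Huv).
    rewrite (lsum_ext _ _ (fun v => f v * (if Nat.eqb (eu e) v then F e else 0)
                                   + f v * (if Nat.eqb (ev e) v then - F e else 0))).
    - rewrite lsum_plus, !lsum_seq_delta by auto. ring.
    - intros v _. destruct (Nat.eqb_spec (eu e) v), (Nat.eqb_spec (ev e) v);
        subst; try ring; congruence. }
  assert (Hsupply : lsum (seq 0 n) (fun v => f v * supply s0 s1 v) = f s0 - f s1).
  { rewrite (lsum_ext _ _ (fun v => f v * (if Nat.eqb s0 v then 1 else 0)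
                                   + f v * (if Nat.eqb s1 v then -1 else 0))).
    - rewrite lsum_plus, !lsum_seq_delta by auto. ring.
    - intros v _. unfold supply. rewrite (Nat.eqb_sym v s0), (Nat.eqb_sym v s1).
      destruct (Nat.eqb_spec s0 v), (Nat.eqb_spec s1 v); subst; try ring; congruence. }
  rewrite <- Hsupply, <- (lsum_ext _ _ _ Hedge), <- lsum_swap.
  apply lsum_ext. intros v Hv. apply in_seq in Hv.
  rewrite <- HF by lia. unfold net_flow. now rewrite <- lsum_scal.
Qed.

Lemma unit_flow_cost_ge F f : unit_flow F ->
  (forall e, (e < m)%nat -> Rabs (f (eu e) - f (ev e)) <= L e) -> f s0 - f s1 <= cost F.
Proof.
  intros HF Hf. rewrite <- (unit_flow_pairing F f HF).
  eapply Rle_trans; [apply Rle_abs|]. eapply Rle_trans; [apply lsum_abs|].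
  apply lsum_le. intros e He. apply in_seq in He. rewrite Rabs_mult.
  specialize (Hf e ltac:(lia)). pose proof (Rabs_pos (F e)). nra.
Qed.

Definition step (c y : R) : R := if Rle_dec c y then 1 else 0.

Lemma step_monotone c a b : 0 <= (a - b) * (step c a - step c b).
Proof.
  unfold step. destruct (Rle_dec c a) as [Ha|Ha], (Rle_dec c b) as [Hb|Hb];
    try apply Rnot_le_lt in Ha; try apply Rnot_le_lt in Hb; nra.
Qed.

(* A unit flow that runs downhill with respect to some potential x carries at
   most one unit on every edge: each level set {w | c <= x w} is a cut that
   the flow crosses only in one direction. *)
Lemma potential_flow_bounded F x : unit_flow F ->
  (forall e, (e < m)%nat -> exists k, 0 <= k /\ F e = k * (x (eu e) - x (ev e))) ->
  forall e, (e < m)%nat -> Rabs (F e) <= 1.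
Proof.
  intros HF Hdown e0 He0.
  assert (Hcut : forall c, F e0 * (step c (x (eu e0)) - step c (x (ev e0))) <= 1).
  { intro c. set (f := fun w => step c (x w)).
    assert (Hterms : forall e, In e (seq 0 m) -> 0 <= F e * (f (eu e) - f (ev e))).
    { intros e He. apply in_seq in He. destruct (Hdown e ltac:(lia)) as (k & Hk & ->).
      unfold f. rewrite Rmult_assoc. apply Rmult_le_pos; [auto | apply step_monotone]. }
    pose proof (lsum_ge_term (seq 0 m) _ e0 ltac:(apply in_seq; lia) Hterms) as Hle.
    cbv beta in Hle. rewrite (unit_flow_pairing F f HF) in Hle.
    unfold f, step in *. destruct (Rle_dec c (x s0)), (Rle_dec c (x s1)); lra. }
  destruct (Hdown e0 He0) as (k & Hk & HFe).
  destruct (Rtotal_order (x (eu e0)) (x (ev e0))) as [Hlt|[Heq|Hgt]].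
  - specialize (Hcut (x (ev e0))). unfold step in Hcut.
    destruct (Rle_dec (x (ev e0)) (x (eu e0))); [lra|].
    destruct (Rle_dec (x (ev e0)) (x (ev e0))); [|lra].
    rewrite Rabs_left1; nra.
  - rewrite HFe, Heq, Rminus_diag, Rmult_0_r, Rabs_R0. lra.
  - specialize (Hcut (x (eu e0))). unfold step in Hcut.
    destruct (Rle_dec (x (eu e0)) (x (eu e0))); [|lra].
    destruct (Rle_dec (x (eu e0)) (x (ev e0))); [lra|].
    rewrite Rabs_right; nra.
Qed.

Definition neg_walk_lengths (w : nat) (r : R) : Prop :=
  exists es, is_walk m eu ev w es s1 /\ r = - walk_len L es.

Definition walk_dist (w : nat) : R :=
  - epsilon (inhabits 0) (is_lub (neg_walk_lengths w)).

Lemma walk_dist_glb w : (w < n)%nat ->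
  (forall es, is_walk m eu ev w es s1 -> walk_dist w <= walk_len L es) /\
  (forall b, (forall es, is_walk m eu ev w es s1 -> b <= walk_len L es) -> b <= walk_dist w).
Proof.
  intros Hw.
  assert (Hlub : is_lub (neg_walk_lengths w) (- walk_dist w)).
  { unfold walk_dist. rewrite Ropp_involutive. apply epsilon_spec.
    destruct (completeness (neg_walk_lengths w)) as [M HM]; [| |now exists M].
    - exists 0. intros r (es & Hes & ->). pose proof (walk_len_nonneg m eu ev L HL _ _ _ Hes). lra.
    - destruct (Hconn w s1 Hw Hs1) as [es Hes]. exists (- walk_len L es), es. auto. }
  destruct Hlub as [Hub Hleast]. split.
  - intros es Hes. specialize (Hub (- walk_len L es) (ex_intro _ es (conj Hes eq_refl))). lra.
  - intros b Hb. assert (- walk_dist w <= - b); [|lra].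
    apply Hleast. intros r (es & Hes & ->). specialize (Hb es Hes). lra.
Qed.

Lemma walk_dist_edge e a : (e < m)%nat -> (eu e = a \/ ev e = a) ->
  walk_dist a <= L e + walk_dist (other eu ev e a).
Proof.
  intros He Ha. destruct (edge_ends e He) as (Hu & Hv & _).
  assert (Hna : (a < n)%nat) by (destruct Ha as [<-|<-]; auto).
  assert (Hnb : (other eu ev e a < n)%nat) by (unfold other; destruct (Nat.eqb (eu e) a); auto).
  destruct (walk_dist_glb _ Hna) as [Ha_le _]. destruct (walk_dist_glb _ Hnb) as [_ Hb_glb].
  assert (walk_dist a - L e <= walk_dist (other eu ev e a)); [|lra].
  apply Hb_glb. intros es Hes.
  assert (Hstep : is_walk m eu ev a (e :: es) s1) by (simpl; auto).
  specialize (Ha_le _ Hstep). rewrite walk_len_lsum, lsum_cons, <- walk_len_lsum in Ha_le. lra.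
Qed.

(* Any lower bound l on the lengths of s0-s1 walks is realised as the
   potential difference of a 1-Lipschitz function (namely the distance to s1). *)
Lemma distance_potential l :
  (forall es, is_walk m eu ev s0 es s1 -> l <= walk_len L es) ->
  exists f : nat -> R, l <= f s0 - f s1 /\
    forall e, (e < m)%nat -> Rabs (f (eu e) - f (ev e)) <= L e.
Proof.
  intros Hl. exists walk_dist. split.
  - destruct (walk_dist_glb _ Hs0) as [_ H0]. destruct (walk_dist_glb _ Hs1) as [H1 _].
    specialize (H0 l Hl). specialize (H1 [] eq_refl). simpl in H1. lra.
  - intros e He. destruct (edge_ends e He) as (_ & _ & Huv).
    pose proof (walk_dist_edge e (eu e) He (or_introl eq_refl)) as Hu.
    pose proof (walk_dist_edge e (ev e) He (or_intror eq_refl)) as Hv.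
    unfold other in Hu, Hv. rewrite Nat.eqb_refl in Hu.
    destruct (Nat.eqb_spec (eu e) (ev e)); [contradiction|].
    apply Rabs_le. lra.
Qed.

Definition flow (d x : nat -> R) (e : nat) : R := d e / L e * (x (eu e) - x (ev e)).

Definition volume (d : nat -> R) : R := lsum (seq 0 m) (fun e => L e * d e).

Definition kirchhoff (d x : nat -> R) : Prop :=
  x s1 = 0 /\ (forall e, (e < m)%nat -> 0 < d e) /\ unit_flow (flow d x).

Lemma flow_drop d x e : (e < m)%nat -> 0 < d e ->
  x (eu e) - x (ev e) = L e * flow d x e / d e.
Proof. intros He Hd. pose proof (HL e He). unfold flow. field. lra. Qed.

Lemma flow_abs_drop d x e : (e < m)%nat -> 0 < d e ->
  Rabs (x (eu e) - x (ev e)) = L e * Rabs (flow d x e) / d e.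
Proof.
  intros He Hd. pose proof (HL e He). rewrite (flow_drop d x e He Hd).
  unfold Rdiv. rewrite !Rabs_mult, (Rabs_right (L e)), (Rabs_right (/ d e)); try lra.
  left. now apply Rinv_0_lt_compat.
Qed.

Lemma energy_identity d x : kirchhoff d x ->
  lsum (seq 0 m) (fun e => L e * flow d x e ^ 2 / d e) = x s0.
Proof.
  intros (Hx1 & Hd & HF).
  rewrite <- (Rminus_0_r (x s0)), <- Hx1, <- (unit_flow_pairing _ x HF).
  apply lsum_ext. intros e He. apply in_seq in He.
  rewrite (flow_drop d x e ltac:(lia) (Hd e ltac:(lia))). field.
  specialize (Hd e ltac:(lia)). lra.
Qed.

Lemma source_potential_nonneg d x : kirchhoff d x -> 0 <= x s0.
Proof.
  intros Hk. pose proof Hk as (_ & Hd & _). rewrite <- (energy_identity d x Hk).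
  apply lsum_nonneg. intros e He. apply in_seq in He.
  specialize (Hd e ltac:(lia)). specialize (HL e ltac:(lia)).
  pose proof (pow2_ge_0 (flow d x e)). unfold Rdiv.
  apply Rmult_le_pos; [nra | left; now apply Rinv_0_lt_compat].
Qed.

Lemma volume_nonneg d : (forall e, (e < m)%nat -> 0 < d e) -> 0 <= volume d.
Proof.
  intros Hd. apply lsum_nonneg. intros e He. apply in_seq in He.
  specialize (Hd e ltac:(lia)). specialize (HL e ltac:(lia)). nra.
Qed.

Lemma slack_identity d x : kirchhoff d x ->
  x s0 - 2 * cost (flow d x) + volume d =
  lsum (seq 0 m) (fun e => L e * d e * (Rabs (flow d x e) / d e - 1) ^ 2).
Proof.
  intros Hk. pose proof Hk as (_ & Hd & _).
  rewrite <- (energy_identity d x Hk). unfold cost, volume.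
  rewrite <- lsum_scal, <- lsum_minus, <- lsum_plus. apply lsum_ext.
  intros e He. apply in_seq in He. specialize (Hd e ltac:(lia)).
  rewrite <- (pow2_abs (flow d x e)). field. lra.
Qed.

Lemma slack_term_le d x e : kirchhoff d x -> (e < m)%nat ->
  L e * d e * (Rabs (flow d x e) / d e - 1) ^ 2 <= x s0 - 2 * cost (flow d x) + volume d.
Proof.
  intros Hk He. pose proof Hk as (_ & Hd & _). rewrite (slack_identity d x Hk).
  apply (lsum_ge_term _ (fun e => L e * d e * (Rabs (flow d x e) / d e - 1) ^ 2));
    [apply in_seq; lia|].
  intros f Hf. apply in_seq in Hf. specialize (Hd f ltac:(lia)). specialize (HL f ltac:(lia)).
  pose proof (pow2_ge_0 (Rabs (flow d x f) / d f - 1)). apply Rmult_le_pos; nra.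
Qed.

Lemma cost_le_mean d x : kirchhoff d x -> 2 * cost (flow d x) <= x s0 + volume d.
Proof.
  intros Hk. pose proof Hk as (_ & Hd & _).
  assert (0 <= lsum (seq 0 m) (fun e => L e * d e * (Rabs (flow d x e) / d e - 1) ^ 2)).
  { apply lsum_nonneg. intros e He. apply in_seq in He.
    specialize (Hd e ltac:(lia)). specialize (HL e ltac:(lia)).
    pose proof (pow2_ge_0 (Rabs (flow d x e) / d e - 1)). apply Rmult_le_pos; nra. }
  rewrite <- (slack_identity d x Hk) in *. lra.
Qed.

(* The proof is
   Thomson's principle: the electrical flow of d2 has less energy in d2 than
   the electrical flow of d1. *)
Lemma energy_monotone d1 x1 d2 x2 lam : kirchhoff d1 x1 -> kirchhoff d2 x2 -> 0 < lam ->
  (forall e, (e < m)%nat -> lam * d1 e <= d2 e) -> x2 s0 <= x1 s0 / lam.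
Proof.
  intros Hk1 Hk2 Hlam Hle. pose proof Hk1 as (_ & Hd1 & HF1). pose proof Hk2 as (Hx2 & Hd2 & _).
  set (F1 := flow d1 x1). set (F2 := flow d2 x2).
  assert (Hcross : lsum (seq 0 m) (fun e => L e * F1 e * F2 e / d2 e) = x2 s0).
  { rewrite <- (Rminus_0_r (x2 s0)), <- Hx2, <- (unit_flow_pairing F1 x2 HF1).
    apply lsum_ext. intros e He. apply in_seq in He.
    unfold F2. rewrite (flow_drop d2 x2 e ltac:(lia) (Hd2 e ltac:(lia))). field.
    specialize (Hd2 e ltac:(lia)). lra. }
  assert (Hthomson : x2 s0 <= lsum (seq 0 m) (fun e => L e * F1 e ^ 2 / d2 e)).
  { assert (Hsq : 0 <= lsum (seq 0 m) (fun e => L e * (F1 e - F2 e) ^ 2 / d2 e)).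
    { apply lsum_nonneg. intros e He. apply in_seq in He.
      specialize (Hd2 e ltac:(lia)). specialize (HL e ltac:(lia)). unfold Rdiv.
      apply Rmult_le_pos; [apply Rmult_le_pos; [lra | apply pow2_ge_0]|].
      left. now apply Rinv_0_lt_compat. }
    rewrite (lsum_ext _ _ (fun e => (L e * F1 e ^ 2 / d2 e - 2 * (L e * F1 e * F2 e / d2 e))
                                     + L e * F2 e ^ 2 / d2 e)) in Hsq.
    - rewrite lsum_plus, lsum_minus, lsum_scal, Hcross in Hsq.
      unfold F2 in Hsq. rewrite (energy_identity d2 x2 Hk2) in Hsq. lra.
    - intros e He. apply in_seq in He. specialize (Hd2 e ltac:(lia)). field. lra. }
  assert (Hcompare : lsum (seq 0 m) (fun e => L e * F1 e ^ 2 / d2 e)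
                     <= lsum (seq 0 m) (fun e => / lam * (L e * F1 e ^ 2 / d1 e))).
  { apply lsum_le. intros e He. apply in_seq in He.
    specialize (Hd1 e ltac:(lia)). specialize (HL e ltac:(lia)). specialize (Hle e ltac:(lia)).
    assert (Hinv : / d2 e <= / lam * / d1 e).
    { rewrite <- Rinv_mult. apply Rinv_le_contravar; nra. }
    pose proof (pow2_ge_0 (F1 e)).
    replace (/ lam * (L e * F1 e ^ 2 / d1 e)) with ((L e * F1 e ^ 2) * (/ lam * / d1 e))
      by (unfold Rdiv; ring).
    unfold Rdiv. apply Rmult_le_compat_l; nra. }
  rewrite lsum_scal in Hcompare. unfold F1 in *.
  rewrite (energy_identity d1 x1 Hk1) in Hcompare.
  replace (x1 s0 / lam) with (/ lam * x1 s0) by (unfold Rdiv; ring). lra.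
Qed.

Lemma flow_le_1 d x e : kirchhoff d x -> (e < m)%nat -> Rabs (flow d x e) <= 1.
Proof.
  intros (_ & Hd & HF) He. apply (potential_flow_bounded _ x HF); auto.
  intros f Hf. exists (d f / L f). split; [|reflexivity].
  specialize (Hd f Hf). specialize (HL f Hf). unfold Rdiv.
  apply Rmult_le_pos; [lra | left; now apply Rinv_0_lt_compat].
Qed.

Lemma potential_drop_walk d x a es b : kirchhoff d x -> is_walk m eu ev a es b ->
  Rabs (x a - x b) <= lsum es (fun e => L e * Rabs (flow d x e) / d e).
Proof.
  intros (_ & Hd & _) Hw. eapply Rle_trans; [apply (walk_abs_le m eu ev x _ _ _ Hw)|].
  right. apply lsum_ext. intros e He. pose proof (walk_edges m eu ev _ _ _ Hw e He).
  apply flow_abs_drop; auto.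
Qed.

Section Trajectory.

Variables (D p : R -> nat -> R) (P0 : list nat).
Hypothesis Hpot : potentials_ok n m eu ev L D p s0 s1.
Hypothesis Htraj : physarum_traj m eu ev L D p.
Hypothesis HP0 : is_walk m eu ev s0 P0 s1.
Hypothesis HP0min : forall es, is_walk m eu ev s0 es s1 -> walk_len L P0 <= walk_len L es.

Local Notation L0 := (walk_len L P0).
Local Notation Q t := (flow (D t) (p t)).

Lemma P0_edges e : In e P0 -> (e < m)%nat.
Proof. exact (walk_edges m eu ev _ _ _ HP0 e). Qed.

Lemma L0_nonneg : 0 <= L0.
Proof. exact (walk_len_nonneg m eu ev L HL _ _ _ HP0). Qed.

Lemma diameter_deriv e t : (e < m)%nat -> 0 < t ->
  derivable_pt_lim (fun s => D s e) t (Rabs (Q t e) - D t e).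
Proof. intros He Ht. destruct (Htraj e He) as (_ & _ & Hd). exact (Hd t Ht). Qed.

(* since D' >= -D, diameters decay at most exponentially *)
Lemma diameter_decay e a b : (e < m)%nat -> 0 < a <= b -> D a e * exp (a - b) <= D b e.
Proof.
  intros He Hab.
  apply (exp_weighted_growth (fun s => D s e) (fun s => Rabs (Q s e) - D s e)); [lra| |].
  - intros c Hc. apply diameter_deriv; auto; lra.
  - intros c _. pose proof (Rabs_pos (Q c e)). lra.
Qed.

(* diameters stay positive: they are positive near 0 by continuity and then
   decay at most exponentially *)
Lemma diameter_pos e t : (e < m)%nat -> 0 <= t -> 0 < D t e.
Proof.
  intros He Ht. destruct (Htraj e He) as (HD0 & Hcont & _).
  destruct (Hcont (D 0 e / 2) ltac:(lra)) as (delta & Hdelta & Hnear).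
  destruct (Rlt_le_dec t delta) as [Hlt|Hge].
  - specialize (Hnear t ltac:(lra)). apply Rabs_def2 in Hnear. lra.
  - specialize (Hnear (delta / 2) ltac:(lra)). apply Rabs_def2 in Hnear.
    pose proof (diameter_decay e (delta / 2) t He ltac:(lra)).
    pose proof (exp_pos (delta / 2 - t)). nra.
Qed.

Lemma kirchhoff_at t : 0 <= t -> kirchhoff (D t) (p t).
Proof.
  intros Ht. destruct (Hpot t Ht) as [Hp1 Hnet].
  split; [exact Hp1 | split; [intros e He; now apply diameter_pos | exact Hnet]].
Qed.

(* since D' <= 1 - D, diameters stay bounded *)
Lemma diameter_le e t : (e < m)%nat -> 1 <= t -> D t e <= 1 + D 1 e.
Proof.
  intros He Ht.
  assert (Hgrow : (1 - D 1 e) * exp (1 - t) <= 1 - D t e).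
  { apply (exp_weighted_growth (fun s => 1 - D s e) (fun s => 0 - (Rabs (Q s e) - D s e)));
      [lra| |].
    - intros c Hc. apply derivable_pt_lim_minus; [apply derivable_pt_lim_const|].
      apply diameter_deriv; auto; lra.
    - intros c Hc. pose proof (flow_le_1 _ _ e (kirchhoff_at c ltac:(lra)) He). lra. }
  pose proof (diameter_pos e 1 He ltac:(lra)).
  assert (Hexp : exp (1 - t) <= exp 0) by (apply exp_le_exp; lra). rewrite exp_0 in Hexp.
  pose proof (exp_pos (1 - t)). nra.
Qed.

Lemma diameter_bounded : exists C, forall e t, (e < m)%nat -> 1 <= t -> D t e <= C.
Proof.
  exists (1 + lsum (seq 0 m) (fun e => D 1 e)). intros e t He Ht.
  eapply Rle_trans; [now apply diameter_le|]. apply Rplus_le_compat_l.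
  apply (lsum_ge_term (seq 0 m) (fun e => D 1 e)); [apply in_seq; lia|].
  intros f Hf. apply in_seq in Hf. left. apply diameter_pos; [lia | lra].
Qed.

Lemma cost_ge_L0 t : 0 <= t -> L0 <= cost (Q t).
Proof.
  intros Ht. destruct (distance_potential L0 HP0min) as (f & Hf & Hlip).
  pose proof (kirchhoff_at t Ht) as (_ & _ & HF).
  pose proof (unit_flow_cost_ge _ f HF Hlip). lra.
Qed.

Lemma energy_le_path t : 0 <= t -> p t s0 <= lsum P0 (fun e => L e * Rabs (Q t e) / D t e).
Proof.
  intros Ht. pose proof (kirchhoff_at t Ht) as Hk. pose proof Hk as (Hp1 & _).
  pose proof (potential_drop_walk _ _ _ _ _ Hk HP0) as Hdrop.
  rewrite Hp1, Rminus_0_r in Hdrop. pose proof (Rle_abs (p t s0)). lra.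
Qed.

(* The Lyapunov function of the dynamics: it is nondecreasing and bounded, and
   its rate of increase controls both the volume and the energy. *)
Definition lyapunov (t : R) : R := lsum P0 (fun e => L e * ln (D t e)) - volume (D t).

Definition lyapunov_rate (t : R) : R :=
  lsum P0 (fun e => L e * Rabs (Q t e) / D t e) - L0 - (cost (Q t) - volume (D t)).

Lemma volume_deriv t : 0 < t ->
  derivable_pt_lim (fun s => volume (D s)) t (cost (Q t) - volume (D t)).
Proof.
  intros Ht.
  replace (cost (Q t) - volume (D t))
    with (lsum (seq 0 m) (fun e => L e * (Rabs (Q t e) - D t e)))
    by (unfold cost, volume; rewrite <- lsum_minus; apply lsum_ext; intros; ring).
  apply (deriv_lsum (seq 0 m) (fun e s => L e * D s e)).
  intros e He. apply in_seq in He. apply derivable_pt_lim_scal, diameter_deriv; auto; lia.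
Qed.

Lemma lyapunov_deriv t : 0 < t -> derivable_pt_lim lyapunov t (lyapunov_rate t).
Proof.
  intros Ht. unfold lyapunov_rate.
  replace (lsum P0 (fun e => L e * Rabs (Q t e) / D t e) - L0)
    with (lsum P0 (fun e => L e * (/ D t e * (Rabs (Q t e) - D t e)))).
  - apply derivable_pt_lim_minus; [|now apply volume_deriv].
    apply (deriv_lsum P0 (fun e s => L e * ln (D s e))). intros e He.
    pose proof (P0_edges e He) as Hem. apply derivable_pt_lim_scal.
    exact (derivable_pt_lim_comp (fun s => D s e) ln t _ _ (diameter_deriv e t Hem Ht)
             (derivable_pt_lim_ln _ (diameter_pos e t Hem ltac:(lra)))).
  - rewrite walk_len_lsum, <- lsum_minus. apply lsum_ext. intros e He.
    pose proof (diameter_pos e t (P0_edges e He) ltac:(lra)). field. lra.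
Qed.

(* G' >= E - S + V - L0, which dominates both S - L0 and (E + V)/2 - L0 *)
Lemma lyapunov_rate_ge t : 0 <= t ->
  cost (Q t) - L0 <= lyapunov_rate t /\ (p t s0 + volume (D t)) / 2 - L0 <= lyapunov_rate t.
Proof.
  intros Ht. unfold lyapunov_rate.
  pose proof (energy_le_path t Ht). pose proof (cost_le_mean _ _ (kirchhoff_at t Ht)).
  split; lra.
Qed.

Lemma volume_nonneg_at t : 0 <= t -> 0 <= volume (D t).
Proof. intros Ht. apply volume_nonneg. intros e He. now apply diameter_pos. Qed.

(* G is nondecreasing, since G' >= S - L0 >= 0 *)
Lemma lyapunov_nondecreasing a b : 0 < a <= b -> lyapunov a <= lyapunov b.
Proof.
  intros Hab. apply (nondecreasing_of_deriv lyapunov lyapunov_rate); [lra| |].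
  - intros c Hc. apply lyapunov_deriv. lra.
  - intros c Hc. destruct (lyapunov_rate_ge c ltac:(lra)) as [Hr _].
    pose proof (cost_ge_L0 c ltac:(lra)). lra.
Qed.

Lemma lyapunov_bounded : exists B, forall t, 1 <= t -> lyapunov t <= B.
Proof.
  destruct diameter_bounded as [C HC]. exists (lsum P0 (fun e => L e * ln C)).
  intros t Ht. unfold lyapunov. pose proof (volume_nonneg_at t ltac:(lra)).
  assert (lsum P0 (fun e => L e * ln (D t e)) <= lsum P0 (fun e => L e * ln C)); [|lra].
  apply lsum_le. intros e He. pose proof (P0_edges e He) as Hem.
  apply Rmult_le_compat_l; [left; auto|].
  apply ln_le_ln; [apply diameter_pos; auto; lra | auto].
Qed.

Lemma lyapunov_settles eps : 0 < eps ->
  exists T, 1 <= T /\ forall s t, T <= s -> s <= t -> lyapunov t - lyapunov s < eps.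
Proof.
  intros Heps. destruct lyapunov_bounded as [B HB].
  set (values := fun r => exists t, 1 <= t /\ r = lyapunov t).
  destruct (completeness values) as [G [Hub Hleast]].
  - exists B. intros r (t & Ht & ->). auto.
  - exists (lyapunov 1), 1. split; [lra | auto].
  - assert (HT : exists T, 1 <= T /\ G - eps < lyapunov T).
    { apply Classical_Prop.NNPP. intros Hno. assert (G <= G - eps); [|lra].
      apply Hleast. intros r (t & Ht & ->). apply Rnot_lt_le. intros Hlt. apply Hno. eauto. }
    destruct HT as (T & HT1 & HT). exists T. split; auto. intros s t Hs Hst.
    assert (lyapunov t <= G) by (apply Hub; exists t; split; [lra | reflexivity]).
    pose proof (lyapunov_nondecreasing T s ltac:(lra)). lra.
Qed.

(* Since the Lyapunov function is bounded below along the trajectory, the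
   diameters of the edges of P0 stay bounded away from 0. *)
Lemma path_diameter_lower e : In e P0 -> exists c, 0 < c /\ forall t, 1 <= t -> c <= D t e.
Proof.
  intros He. pose proof (P0_edges e He) as Hem. pose proof (HL e Hem) as HLe.
  destruct diameter_bounded as [C HC]. set (B := lsum P0 (fun f => L f * ln C)).
  exists (exp (ln C + (lyapunov 1 - B) / L e)). split; [apply exp_pos|]. intros t Ht.
  assert (HDe : 0 < D t e) by (apply diameter_pos; auto; lra).
  assert (Hterm : L e * ln C - L e * ln (D t e) <= B - lsum P0 (fun f => L f * ln (D t f))).
  { unfold B. rewrite <- lsum_minus.
    apply (lsum_ge_term P0 (fun f => L f * ln C - L f * ln (D t f))); auto.
    intros f Hf. pose proof (P0_edges f Hf) as Hfm. pose proof (HL f Hfm).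
    assert (ln (D t f) <= ln C) by (apply ln_le_ln; [apply diameter_pos; auto; lra | auto]).
    nra. }
  pose proof (lyapunov_nondecreasing 1 t ltac:(lra)) as Hmono.
  pose proof (volume_nonneg_at t ltac:(lra)). unfold lyapunov at 2 in Hmono.
  rewrite <- (exp_ln (D t e)) by auto. apply exp_le_exp.
  assert ((lyapunov 1 - B) / L e <= ln (D t e) - ln C); [|lra].
  apply (Rmult_le_reg_r (L e)); auto. unfold Rdiv. rewrite Rmult_assoc, Rinv_l by lra. lra.
Qed.

(* V' = cost - V >= L0 - V, so V is eventually at least about L0 *)
Lemma volume_lower eps : 0 < eps -> eventually (fun t => L0 - eps < volume (D t)).
Proof.
  intros Heps.
  apply (eventually_mono (fun t => 1 <= t /\ - (volume (D 1) - L0) * exp (1 - t) < eps)).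
  - intros t [Ht Hsmall].
    assert (Hgrow : (volume (D 1) - L0) * exp (1 - t) <= volume (D t) - L0).
    { apply (exp_weighted_growth (fun s => volume (D s) - L0)
               (fun s => (cost (Q s) - volume (D s)) - 0)); auto.
      - intros c Hc. apply derivable_pt_lim_minus; [apply volume_deriv; lra|].
        apply derivable_pt_lim_const.
      - intros c Hc. pose proof (cost_ge_L0 c ltac:(lra)). lra. }
    lra.
  - apply eventually_and; [apply eventually_ge | now apply exp_tail_small].
Qed.

(* (V - lyapunov)' <= L0 - V, and the Lyapunov function eventually gains
   little, so V is eventually at most about L0 *)
Lemma volume_upper eps : 0 < eps -> eventually (fun t => volume (D t) < L0 + eps).
Proof.
  intros Heps. destruct (lyapunov_settles (eps / 2) ltac:(lra)) as (T & HT1 & Hsettle).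
  apply (eventually_mono (fun t => T <= t /\ (volume (D T) - L0) * exp (T - t) < eps / 2)).
  - intros t [Ht Hsmall].
    assert (Hgrow : (lyapunov T - lyapunov T + L0 - volume (D T)) * exp (T - t)
                    <= lyapunov t - lyapunov T + L0 - volume (D t)).
    { apply (exp_weighted_growth (fun s => lyapunov s - lyapunov T + L0 - volume (D s))
               (fun s => lyapunov_rate s - 0 + 0 - (cost (Q s) - volume (D s)))); auto.
      - intros c Hc. apply derivable_pt_lim_minus; [|apply volume_deriv; lra].
        apply derivable_pt_lim_plus; [|apply derivable_pt_lim_const].
        apply derivable_pt_lim_minus; [apply lyapunov_deriv; lra | apply derivable_pt_lim_const].
      - intros c Hc. destruct (lyapunov_rate_ge c ltac:(lra)) as [Hr _].
        pose proof (lyapunov_nondecreasing T c ltac:(lra)). lra. }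
    specialize (Hsettle T t ltac:(lra) Ht). lra.
  - apply eventually_and; [apply eventually_ge | apply exp_tail_small; lra].
Qed.

(* energy >= 2 cost - volume >= 2 L0 - volume *)
Lemma energy_lower eps : 0 < eps -> eventually (fun t => L0 - eps < p t s0).
Proof.
  intros Heps. apply (eventually_mono (fun t => 0 <= t /\ volume (D t) < L0 + eps)).
  - intros t [Ht HV]. pose proof (cost_ge_L0 t Ht).
    pose proof (cost_le_mean _ _ (kirchhoff_at t Ht)). lra.
  - apply eventually_and; [apply eventually_ge | now apply volume_upper].
Qed.

(* diameters decay at most exponentially, hence by Rayleigh monotonicity the
   energy grows at most exponentially *)
Lemma energy_growth s t : 0 < s <= t -> p t s0 <= p s s0 * exp (t - s).
Proof.
  intros Hst.
  replace (p s s0 * exp (t - s)) with (p s s0 / exp (s - t))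
    by (replace (t - s) with (- (s - t)) by ring; rewrite exp_Ropp; reflexivity).
  apply (energy_monotone (D s) (p s) (D t) (p t) (exp (s - t)));
    [apply kirchhoff_at; lra | apply kirchhoff_at; lra | apply exp_pos |].
  intros e He. rewrite Rmult_comm. now apply diameter_decay.
Qed.

(* If the energy were at least L0 + eps at a late time t, then by energy_growth
   it would stay above L0 + eps/2 on a window [t - delta, t] of fixed length,
   where the Lyapunov function would then gain at least delta * eps / 8. *)
Lemma energy_upper eps : 0 < eps -> eventually (fun t => p t s0 < L0 + eps).
Proof.
  intros Heps. pose proof L0_nonneg.
  set (rho := (L0 + eps) / (L0 + eps / 2)).
  assert (Hrho_eq : (L0 + eps / 2) * rho = L0 + eps) by (unfold rho; field; lra).
  assert (Hrho : 1 < rho) by nra.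
  set (delta := ln rho).
  assert (Hdelta : 0 < delta) by (unfold delta; rewrite <- ln_1; apply ln_increasing; lra).
  assert (Hexp_delta : exp delta = rho) by (apply exp_ln; lra).
  destruct (lyapunov_settles (delta * eps / 8) ltac:(nra)) as (T & HT1 & Hsettle).
  assert (Hev : eventually (fun s => T <= s /\ L0 - eps / 4 < volume (D s)))
    by (apply eventually_and; [apply eventually_ge | apply volume_lower; lra]).
  apply (eventually_window _ delta) in Hev. revert Hev. apply eventually_mono.
  intros t Hwin. apply Rnot_le_lt. intros Hbig.
  assert (HtT : T <= t - delta) by (apply (Hwin (t - delta)); lra).
  assert (Hhigh : forall s, t - delta <= s <= t -> L0 + eps / 2 <= p s s0).
  { intros s Hs. pose proof (energy_growth s t ltac:(lra)) as Hg.
    assert (exp (t - s) <= rho) by (rewrite <- Hexp_delta; apply exp_le_exp; lra).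
    pose proof (source_potential_nonneg _ _ (kirchhoff_at s ltac:(lra))). nra. }
  assert (Hrise : lyapunov (t - delta) - eps / 8 * (t - delta) <= lyapunov t - eps / 8 * t).
  { apply (nondecreasing_of_deriv (fun s => lyapunov s - eps / 8 * s)
             (fun s => lyapunov_rate s - eps / 8 * 1)); [lra| |].
    - intros c Hc. apply derivable_pt_lim_minus; [apply lyapunov_deriv; lra|].
      apply derivable_pt_lim_scal, derivable_pt_lim_id.
    - intros c Hc. destruct (lyapunov_rate_ge c ltac:(lra)) as [_ Hr].
      pose proof (Hhigh c Hc). destruct (Hwin c ltac:(lra)) as [_ HV]. lra. }
  specialize (Hsettle (t - delta) t HtT ltac:(lra)). nra.
Qed.

Lemma slack_vanishes eps : 0 < eps ->
  eventually (fun t => p t s0 - 2 * cost (Q t) + volume (D t) < eps).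
Proof.
  intros Heps.
  apply (eventually_mono (fun t => (0 <= t /\ p t s0 < L0 + eps / 2) /\
                                   volume (D t) < L0 + eps / 2)).
  - intros t [[Ht HE] HV]. pose proof (cost_ge_L0 t Ht). lra.
  - apply eventually_and; [apply eventually_and; [apply eventually_ge|] |];
      [apply energy_upper | apply volume_upper]; lra.
Qed.

(* On an edge of P0 the diameter stays bounded below, so the vanishing slack
   forces |Q e| / D e -> 1, i.e. the potential drop tends to at most L e. *)
Lemma path_edge_drop e eta : In e P0 -> 0 < eta ->
  eventually (fun t => Rabs (p t (eu e) - p t (ev e)) <= L e + eta).
Proof.
  intros He Heta. pose proof (P0_edges e He) as Hem. pose proof (HL e Hem) as HLe.
  destruct (path_diameter_lower e He) as (c & Hc & HcD).
  set (r := eta / L e). assert (Hr : 0 < r) by (unfold r; apply Rdiv_lt_0_compat; lra).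
  apply (eventually_mono (fun t => 1 <= t /\
           p t s0 - 2 * cost (Q t) + volume (D t) < L e * c * r ^ 2)).
  - intros t [Ht Hslack]. pose proof (diameter_pos e t Hem ltac:(lra)) as HDe.
    pose proof (HcD t Ht) as HcDt.
    pose proof (slack_term_le _ _ e (kirchhoff_at t ltac:(lra)) Hem) as Hterm.
    rewrite (flow_abs_drop _ _ e Hem HDe).
    set (q := Rabs (Q t e) / D t e) in *.
    assert (Hsq : L e * c * (q - 1) ^ 2 < L e * c * r ^ 2).
    { pose proof (pow2_ge_0 (q - 1)).
      assert (L e * c * (q - 1) ^ 2 <= L e * D t e * (q - 1) ^ 2) by
        (apply Rmult_le_compat_r; [auto | apply Rmult_le_compat_l; lra]).
      lra. }
    assert (Hq : q <= 1 + r).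
    { apply Rmult_lt_reg_l in Hsq; [|nra]. nra. }
    replace (L e * Rabs (Q t e) / D t e) with (L e * q) by (unfold q, Rdiv; ring).
    replace (L e + eta) with (L e * (1 + r)) by (unfold r; field; lra).
    apply Rmult_le_compat_l; lra.
  - apply eventually_and; [apply eventually_ge | apply slack_vanishes].
    pose proof (pow_lt r 2 Hr). apply Rmult_lt_0_compat; [nra | auto].
Qed.

(* Along P0 = es1 ++ es2 the potential drops by about L e on each edge, while
   the total drop p s0 tends to L0: so the potential at the splitting vertex
   tends to the length of the remaining part es2. *)
Lemma potential_on_path es1 es2 v eps : P0 = es1 ++ es2 ->
  is_walk m eu ev s0 es1 v -> is_walk m eu ev v es2 s1 -> 0 < eps ->
  eventually (fun t => Rabs (p t v - walk_len L es2) < eps).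
Proof.
  intros HP H1 H2 Heps.
  pose proof (pos_INR (length P0)). set (N := INR (length P0)) in *.
  set (eta := eps / (2 * (N + 1))).
  assert (Heta : 0 < eta) by (unfold eta; apply Rdiv_lt_0_compat; lra).
  assert (HetaN : eta * (N + 1) = eps / 2) by (unfold eta; field; lra).
  assert (Hlen : eta * INR (length es1) + eta * INR (length es2) = eta * N)
    by (unfold N; rewrite HP, length_app, plus_INR; ring).
  assert (Hsplit : L0 = walk_len L es1 + walk_len L es2)
    by (rewrite HP, !walk_len_lsum, lsum_app; reflexivity).
  pose proof (Rmult_le_pos _ _ (Rlt_le _ _ Heta) (pos_INR (length es1))).
  pose proof (Rmult_le_pos _ _ (Rlt_le _ _ Heta) (pos_INR (length es2))).
  apply (eventually_mono (fun t => (0 <= t /\ L0 - eps / 2 < p t s0) /\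
           forall e, In e P0 -> Rabs (p t (eu e) - p t (ev e)) <= L e + eta)).
  - intros t [[Ht HE] Hedges]. pose proof (kirchhoff_at t Ht) as (Hp1 & _).
    pose proof (walk_drop_bound m eu ev L (p t) eta _ _ _ H1) as U1.
    pose proof (walk_drop_bound m eu ev L (p t) eta _ _ _ H2) as U2.
    specialize (U1 (fun e He => Hedges e ltac:(rewrite HP; apply in_or_app; now left))).
    specialize (U2 (fun e He => Hedges e ltac:(rewrite HP; apply in_or_app; now right))).
    rewrite Hp1, Rminus_0_r in U2.
    pose proof (Rle_abs (p t v)). pose proof (Rle_abs (p t s0 - p t v)).
    apply Rabs_def1; lra.
  - apply eventually_and; [apply eventually_and; [apply eventually_ge | apply energy_lower; lra]|].
    apply eventually_all. intros e He. now apply path_edge_drop.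
Qed.

End Trajectory.
End Network.

Theorem mainTheorem8
  (n m : nat) (eu ev : nat -> nat) (L : nat -> R) (s0 s1 : nat)
  (Hsimple : simple_graph n m eu ev)
  (Hconn : connected n m eu ev)
  (Hs0 : (s0 < n)%nat) (Hs1 : (s1 < n)%nat) (Hs01 : s0 <> s1)
  (HL : forall e, (e < m)%nat -> 0 < L e)
  (P0 : list nat) (HP0 : unique_shortest_path m eu ev L s0 s1 P0)
  (D : R -> nat -> R) (p : R -> nat -> R)
  (Hpot : potentials_ok n m eu ev L D p s0 s1)
  (Htraj : physarum_traj m eu ev L D p) :
  forall v d, In v (walk_verts eu ev s0 P0) -> is_dist m eu ev L v s1 d ->
    forall eps, 0 < eps -> exists T, forall t, T <= t -> Rabs (p t v - d) < eps.
Proof.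
  intros v d Hv Hd eps Heps.
  assert (HW : is_walk m eu ev s0 P0 s1) by apply HP0.
  pose proof (unique_shortest_is_shortest m eu ev L HL s0 s1 P0 HP0) as Hmin.
  destruct (walk_split m eu ev s0 P0 s1 v HW Hv) as (es1 & es2 & _ & HP & H1 & H2 & _).
  rewrite (shortest_suffix_dist m eu ev L s0 s1 P0 es1 es2 v d Hmin HP H1 H2 Hd).
  exact (potential_on_path n m eu ev L s0 s1 Hsimple Hconn Hs0 Hs1 Hs01 HL
           D p P0 Hpot Htraj HW Hmin es1 es2 v eps HP H1 H2 Heps).
Qed.
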